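(* Let $(G_n)_{n\in\mathbb{N}}$ be a sequence of groups equipped with a diverse $d$-ary cloning system. Then the normalizer of $F_d$ in $\mathscr{T}_d(G_* )$ equals $F_d$, i.e. $\{x\in\mathscr{T}_d(G_* ): x^{-1}F_dx=F_d\}=F_d$.
   Context: Fix an integer $d\ge 2$. A $d$-ary tree is a finite rooted tree in which each non-leaf vertex has exactly $d$ ordered children; leaves are numbered $1,\dots,n$ left to right. For $1\le k\le n$, $T_k$ is $T$ with a $d$-ary caret attached to its $k$-th leaf. Standard cloning maps: for $\sigma\in S_n$, $1\le k\le n$, partition $\{1,\dots,n+d-1\}$ into consecutive blocks $B^{(k)}_j=\{j\}$ ($j<k$), $B^{(k)}_k=\{k,\dots,k+d-1\}$, $B^{(k)}_j=\{j+d-1\}$ ($j>k$); $(\sigma)\varsigma_k^n$ maps $B^{(k)}_j$ onto $B^{(\sigma(k))}_{\sigma(j)}$ order-preservingly. A $d$-ary cloning system: groups $(G_n)$, homomorphisms $\rho_n:G_n\to S_n$, injective functions $\kappa_k^n:G_n\to G_{n+d-1}$ written on the right with $(g)(\kappa\circ\kappa'):=((g)\kappa)\kappa'$, such that for $1\le k<\ell\le n$, $g,h\in G_n$: (C1) $(gh)\kappa_k^n=(g)\kappa^n_{\rho_n(h)k}(h)\kappa_k^n$; (C2) $\kappa_\ell^n\circ\kappa_k^{n+d-1}=\kappa_k^n\circ\kappa_{\ell+d-1}^{n+d-1}$; (C3) $\rho_{n+d-1}((g)\kappa_k^n)(i)=((\rho_n(g))\varsigma_k^n)(i)$ for $i\notin\{k,\dots,k+d-1\}$.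 $\mathscr{T}_d(G_* )$: classes $[T,g,U]$ ($T,U$ with $n$ leaves, $g\in G_n$) under the equivalence generated by $(T,g,U)\sim(T_{\rho_n(g)(k)},(g)\kappa_k^n,U_k)$, product $[T,g,U][U,h,W]=[T,gh,W]$. The elements $[T,1,U]$ form the subgroup $F_d$. Diverse: some $n_0$ has $\bigcap_{k=1}^n\mathrm{Im}\,\kappa_k^n=\{1\}$ for all $n\ge n_0$. *)

From Stdlib Require Import Relations.
From HB Require Import structures.
From mathcomp Require Import all_boot all_fingroup.
Set Implicit Arguments. Unset Strict Implicit. Unset Printing Implicit Defensive.

(* Conventions: leaves, children and indices are numbered from 0
   (the paper numbers from 1); leaf k here = leaf k+1 in the paper. *)

Inductive tree : Type := Leaf : tree | Node : seq tree -> tree.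

Fixpoint nleaves (t : tree) : nat :=
  match t with
  | Leaf => 1
  | Node ts => (fix f (ts : seq tree) : nat :=
                  match ts with [::] => 0 | t :: ts => nleaves t + f ts end) ts
  end.

Fixpoint dary (d : nat) (t : tree) : bool :=
  match t with
  | Leaf => true
  | Node ts => (size ts == d) &&
               (fix f (ts : seq tree) : bool :=
                  match ts with [::] => true | t :: ts => dary d t && f ts end) ts
  end.

(* addc d k t = t_k : t with a d-ary caret attached to its k-th leaf (0-based) *)
Fixpoint addc (d k : nat) (t : tree) : tree :=
  match t with
  | Leaf => if k == 0 then Node (nseq d Leaf) else Leaf
  | Node ts => Node ((fix go (k : nat) (ts : seq tree) : seq tree :=
                        match ts with
                        | [::] => [::]
                        | t :: ts => if k < nleaves t then addc d k t :: ts
                                     else t :: go (k - nleaves t) ts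
                        end) k ts)
  end.

Definition permn (n : nat) (s : 'S_n) (k : nat) : nat :=
  match @insub _ (fun i => i < n) 'I_n k with Some o => val (s o) | None => k end.

(* standard cloning map (sigma)varsigma_k^n, as a function on indices
   {0,...,n+d-2}; blocks B^(k)_j = {j} (j<k), {k,...,k+d-1} (j=k), {j+d-1} (j>k) *)
Definition blk_start (d m j : nat) : nat := if j <= m then j else j + d.-1.
Definition blk_idx (d k i : nat) : nat :=
  if i < k then i else if i < k + d then k else i - d.-1.
Definition blk_off (d k i : nat) : nat := if (k <= i < k + d) then i - k else 0.
Definition sclone (d n : nat) (s : 'S_n) (k i : nat) : nat :=
  blk_start d (permn s k) (permn s (blk_idx d k i)) + blk_off d k i.

Record cloning_system (d : nat) := CloningSystem {
  G : nat -> Type;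
  gmul : forall n, G n -> G n -> G n;
  gone : forall n, G n;
  ginv : forall n, G n -> G n;
  gmulA : forall n (x y z : G n), gmul x (gmul y z) = gmul (gmul x y) z;
  gmul1 : forall n (x : G n), gmul (gone n) x = x;
  gmulV : forall n (x : G n), gmul (ginv x) x = gone n;
  rho : forall n, G n -> 'S_n;
  (* rho_n is a homomorphism, permutations composed as functions *)
  rhoM : forall n (g h : G n) (i : 'I_n), rho (gmul g h) i = rho g (rho h i);
  kappa : forall n, nat -> G n -> G (n + d.-1);
  kappa_inj : forall n k, k < n -> injective (@kappa n k);
  cloneC1 : forall n k (g h : G n), k < n ->
    kappa k (gmul g h) = gmul (kappa (permn (rho h) k) g) (kappa k h);
  cloneC2 : forall n k l (g : G n), k < l < n ->
    kappa k (kappa l g) = kappa (l + d.-1) (kappa k g);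
  cloneC3 : forall n k (g : G n) (i : 'I_(n + d.-1)), k < n ->
    ~~ (k <= i < k + d) -> val (rho (kappa k g) i) = sclone d (rho g) k i
}.

Arguments gmul {d} c {n}.
Arguments gone {d} c n.
Arguments ginv {d} c {n}.
Arguments rho {d} c {n}.
Arguments kappa {d} c {n}.

Definition diverse d (c : cloning_system d) : Prop :=
  exists n0, forall n, n0 <= n -> forall g : G c (n + d.-1),
    (forall k, k < n -> exists h : G c n, kappa c k h = g) -> g = gone c (n + d.-1).

Section Td.
Variables (d : nat) (c : cloning_system d).

Record triple := Triple { tn : nat; tT : tree; tg : G c tn; tU : tree }.

Definition wf_triple (x : triple) : Prop :=
  dary d (tT x) /\ dary d (tU x) /\ nleaves (tT x) = tn x /\ nleaves (tU x) = tn x.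

Inductive expand : triple -> triple -> Prop :=
  expand_intro n T (g : G c n) U k :
    wf_triple (Triple T g U) -> k < n ->
    expand (Triple T g U)
           (Triple (addc d (permn (rho c g) k) T) (kappa c k g) (addc d k U)).

Definition tequiv : relation triple := clos_refl_sym_trans triple expand.

(* elements of T_d(G_* ) are equivalence classes, represented as predicates *)
Definition cls (x : triple) : triple -> Prop := fun y => tequiv y x.

Definition tmul (X Y : triple -> Prop) : triple -> Prop := fun z =>
  exists n T (g : G c n) U (h : G c n) W,
    X (Triple T g U) /\ Y (Triple U h W) /\ tequiv z (Triple T (gmul c g h) W).

Definition tinv (X : triple -> Prop) : triple -> Prop := fun z =>
  exists n T (g : G c n) U, X (Triple T g U) /\ tequiv z (Triple U (ginv c g) T).

Definition Fd (X : triple -> Prop) : Prop :=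
  exists n T U, wf_triple (Triple T (gone c n) U) /\ X = cls (Triple T (gone c n) U).

Definition conjFd (X : triple -> Prop) (Y : triple -> Prop) : Prop :=
  exists Z, Fd Z /\ Y = tmul (tmul (tinv X) Z) X.

End Td.

From mathcomp Require Import all_boot all_fingroup.
From Stdlib Require Import Relations Lia FunctionalExtensionality PropExtensionality.
From mathcomp Require Import zify.
Set Implicit Arguments. Unset Strict Implicit. Unset Printing Implicit Defensive.

(* Suppose x = [T,g,U] normalises F_d.  For leaves a, m put b = rho(g)(m); then
   x^-1 [T_a,1,T_b] x contains the triple
   (U_{rho(g^-1)(a)}, kappa_a(g^-1) kappa_m(g), U_m), and since expansions
   preserve the label 1, it lies in F_d only if kappa_a(g^-1) kappa_m(g) = 1.
   Hence kappa_k(g^-1) = kappa_0(g)^-1 for every k, so kappa_0(g^-1) lies in the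
   image of every kappa_k.  After expanding x until it has at least n_0 leaves,
   diversity gives kappa_0(g^-1) = 1, and g = 1 by injectivity of kappa_0.
   Conversely x^-1 F_d x = F_d for x in F_d because F_d is a subgroup, which
   rests on two facts: triples [T,1,U] and [T',1,U'] are equivalent iff the
   tree pairs become equal after grafting d-ary forests on their leaves, and any
   two d-ary trees have a common expansion. *)

Fixpoint all_Prop (P : tree -> Prop) (ts : seq tree) : Prop :=
  if ts is t :: ts then P t /\ all_Prop P ts else True.

Fixpoint tree_all_ind (P : tree -> Prop) (HL : P Leaf)
  (HN : forall ts, all_Prop P ts -> P (Node ts)) (t : tree) : P t :=
  match t with
  | Leaf => HL
  | Node ts => HN ts ((fix f (ts : seq tree) : all_Prop P ts :=
        match ts with [::] => I | t :: ts => conj (tree_all_ind HL HN t) (f ts) end) ts)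
  end.

Lemma nleavesE ts : nleaves (Node ts) = sumn (map nleaves ts).
Proof. by elim: ts => //= t ts ->. Qed.

Lemma daryE d ts : dary d (Node ts) = (size ts == d) && all (dary d) ts.
Proof. by rewrite /=; congr (_ && _); elim: ts => //= t ts ->. Qed.

Fixpoint addcl d (k : nat) (ts : seq tree) : seq tree :=
  if ts is t :: ts then
    if k < nleaves t then addc d k t :: ts else t :: addcl d (k - nleaves t) ts
  else [::].

Lemma addcE d k ts : addc d k (Node ts) = Node (addcl d k ts).
Proof. by rewrite /=; congr Node; elim: ts k => //= t ts IH k; rewrite IH. Qed.

Lemma all_flatten T (P : pred T) (ss : seq (seq T)) :
  all P (flatten ss) = all (all P) ss.
Proof. by elim: ss => //= s ss <-; rewrite all_cat. Qed.

Fixpoint graft (t : tree) (ss : seq tree) : tree :=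
  match t with
  | Leaf => head Leaf ss
  | Node ts => Node ((fix go (ts : seq tree) (ss : seq tree) : seq tree :=
       match ts with
       | [::] => [::]
       | t :: ts => graft t (take (nleaves t) ss) :: go ts (drop (nleaves t) ss)
       end) ts ss)
  end.

Fixpoint graftl (ts : seq tree) (ss : seq tree) : seq tree :=
  if ts is t :: ts then
    graft t (take (nleaves t) ss) :: graftl ts (drop (nleaves t) ss)
  else [::].

Lemma graftE ts ss : graft (Node ts) ss = Node (graftl ts ss).
Proof. by rewrite /=; congr Node; elim: ts ss => //= t ts IH ss; rewrite IH. Qed.

Lemma size_graftl ts ss : size (graftl ts ss) = size ts.
Proof. by elim: ts ss => //= t ts IH ss; rewrite IH. Qed.

Lemma graft_leaves t : graft t (nseq (nleaves t) Leaf) = t.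
Proof.
elim/tree_all_ind: t => // ts IH; rewrite graftE nleavesE; congr Node.
elim: ts IH => //= t ts IHl [IHt IHts].
by rewrite take_nseq ?leq_addr // drop_nseq addKn IHt IHl.
Qed.

Lemma graftl_leaves ts : graftl ts (nseq (sumn (map nleaves ts)) Leaf) = ts.
Proof. by have := graft_leaves (Node ts); rewrite graftE nleavesE => -[]. Qed.

Lemma nleaves_graft t ss : size ss = nleaves t ->
  nleaves (graft t ss) = sumn (map nleaves ss).
Proof.
elim/tree_all_ind: t ss => [|ts IH] ss.
  by case: ss => [|s [|]] //= _; rewrite addn0.
rewrite graftE !nleavesE.
elim: ts IH ss => [_|t ts IHl [IHt IHts]] ss /=; first by case: ss.
move=> Hs; rewrite IHt ?size_takel ?(IHl IHts) ?size_drop; try lia.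
by rewrite -sumn_cat -map_cat cat_take_drop.
Qed.

Lemma graft_inj t ss ss' : size ss = nleaves t -> size ss' = nleaves t ->
  graft t ss = graft t ss' -> ss = ss'.
Proof.
elim/tree_all_ind: t ss ss' => [|ts IH] ss ss'.
  by case: ss => [|s [|]] //; case: ss' => [|s' [|]] //= _ _ ->.
rewrite !graftE nleavesE => + + [].
elim: ts IH ss ss' => [_|t ts IHl [IHt IHts]] ss ss' /=.
  by case: ss => //; case: ss'.
move=> Hs Hs' [E1 E2].
rewrite -(cat_take_drop (nleaves t) ss) -(cat_take_drop (nleaves t) ss').
congr (_ ++ _); first by apply: IHt E1; rewrite size_takel //; lia.
by apply: IHl E2 => //; rewrite size_drop; lia.
Qed.

Fixpoint graft2 (ss : seq tree) (rrs : seq (seq tree)) : seq tree :=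
  match ss, rrs with s :: ss, r :: rrs => graft s r :: graft2 ss rrs | _, _ => [::] end.

Lemma size_graft2 ss rrs : size ss = size rrs -> size (graft2 ss rrs) = size ss.
Proof. by elim: ss rrs => [|s ss IH] [|r rrs] //= [] /IH ->. Qed.

Lemma graft2_cat ss1 ss2 rrs1 rrs2 : size ss1 = size rrs1 ->
  graft2 (ss1 ++ ss2) (rrs1 ++ rrs2) = graft2 ss1 rrs1 ++ graft2 ss2 rrs2.
Proof. by elim: ss1 rrs1 => [|s ss1 IH] [|r rrs1] //= [] /IH ->. Qed.

Lemma graft2_leaves n ss : size ss = n ->
  graft2 (nseq n Leaf) [seq [:: s] | s <- ss] = ss.
Proof. by move<-; elim: ss => //= s ss ->. Qed.

Lemma take_graft2 n ss rrs : take n (graft2 ss rrs) = graft2 (take n ss) (take n rrs).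
Proof. by elim: ss n rrs => [|s ss IH] [|n] [|r rrs] //=; rewrite IH. Qed.

Lemma drop_graft2 n ss rrs : drop n (graft2 ss rrs) = graft2 (drop n ss) (drop n rrs).
Proof. by elim: ss n rrs => [|s ss IH] [|n] [|r rrs] //=; case: (drop n ss). Qed.

Lemma graft_assoc t ss rrs : size ss = nleaves t -> shape rrs = map nleaves ss ->
  graft (graft t ss) (flatten rrs) = graft t (graft2 ss rrs).
Proof.
elim/tree_all_ind: t ss rrs => [|ts IH] ss rrs.
  by case: ss => [|s [|]] //= _; case: rrs => [|r [|]] //= _; rewrite cats0.
rewrite !graftE nleavesE => Hs Hsh; congr Node.
elim: ts IH ss rrs Hs Hsh => [_|t ts IHl [IHt IHts]] ss rrs //= Hs Hsh.
have shape_take : shape (take (nleaves t) rrs) = map nleaves (take (nleaves t) ss).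
  by rewrite /shape !map_take -/(shape rrs) Hsh.
have shape_drop : shape (drop (nleaves t) rrs) = map nleaves (drop (nleaves t) ss).
  by rewrite /shape !map_drop -/(shape rrs) Hsh.
have E : nleaves (graft t (take (nleaves t) ss)) = size (flatten (take (nleaves t) rrs)).
  by rewrite nleaves_graft ?size_takel ?size_flatten ?shape_take //; lia.
rewrite -{1 2}(cat_take_drop (nleaves t) rrs) flatten_cat E take_size_cat //.
rewrite drop_size_cat // take_graft2 drop_graft2 IHt ?size_takel //; last by lia.
by rewrite IHl // size_drop; lia.
Qed.

Definition regraft (ss rr : seq tree) := graft2 ss (reshape (map nleaves ss) rr).

Lemma size_regraft ss rr : size (regraft ss rr) = size ss.
Proof. by rewrite size_graft2 // size_reshape size_map. Qed.

Lemma graft_graft t ss rr : size ss = nleaves t ->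
  size rr = sumn (map nleaves ss) ->
  graft (graft t ss) rr = graft t (regraft ss rr).
Proof.
move=> Hs Hr; rewrite -graft_assoc ?reshapeKr ?reshapeKl ?Hr //.
Qed.

(** * Common expansions of d-ary trees *)

Section DaryTrees.
Variable d : nat.

Lemma all_dary_leaves n : all (dary d) (nseq n Leaf).
Proof. by elim: n. Qed.

Lemma dary_graft t ss : dary d t -> all (dary d) ss -> size ss = nleaves t ->
  dary d (graft t ss).
Proof.
elim/tree_all_ind: t ss => [|ts IH] ss.
  by case: ss => [|s [|]] //= _ /andP[].
rewrite graftE !daryE nleavesE size_graftl => /andP[-> Hts] Hss Hs /=.
elim: ts IH ss Hss Hs Hts => [_|t ts IHl [IHt IHts]] ss //= Hss Hs /andP[Ht Hts].
rewrite -(cat_take_drop (nleaves t) ss) all_cat in Hss; case/andP: Hss => H1 H2.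
rewrite IHt ?IHl ?size_takel ?size_drop //; lia.
Qed.

Lemma all_dary_graft2 ss rrs : all (dary d) ss -> all (all (dary d)) rrs ->
  shape rrs = map nleaves ss -> all (dary d) (graft2 ss rrs).
Proof.
elim: ss rrs => [|s ss IH] [|r rrs] //= /andP[Hs Hss] /andP[Hr Hrrs] [Hsz Hsh].
by rewrite IH ?dary_graft.
Qed.

Lemma all_dary_regraft ss rr : all (dary d) ss -> all (dary d) rr ->
  size rr = sumn (map nleaves ss) -> all (dary d) (regraft ss rr).
Proof.
move=> Hss Hrr Hr; apply: all_dary_graft2; rewrite ?reshapeKl ?Hr //.
by rewrite -all_flatten reshapeKr ?Hr.
Qed.

Definition caret := Node (nseq d Leaf).

Definition caret_at k N := nseq k Leaf ++ caret :: nseq (N - k.+1) Leaf.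

Lemma graft_caret ts : size ts = d -> graft caret ts = Node ts.
Proof.
move=> Hts; rewrite /caret -Hts graftE; congr Node.
by elim: ts {Hts} => //= t ts IH; rewrite ?drop0 IH.
Qed.

Lemma nleaves_caret : nleaves caret = d.
Proof. by rewrite /caret nleavesE; elim: d => //= n ->; lia. Qed.

Lemma dary_caret : dary d caret.
Proof. by rewrite /caret daryE size_nseq eqxx all_dary_leaves. Qed.

Lemma size_caret_at k N : k < N -> size (caret_at k N) = N.
Proof. by rewrite /caret_at size_cat /= !size_nseq; lia. Qed.

Lemma all_dary_caret_at k N : all (dary d) (caret_at k N).
Proof.
rewrite /caret_at all_cat all_dary_leaves /= all_dary_leaves andbT; exact: dary_caret.
Qed.

Lemma caret_at_split k m N : k < m + N -> caret_at k (m + N) =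
  if k < m then caret_at k m ++ nseq N Leaf else nseq m Leaf ++ caret_at (k - m) N.
Proof.
rewrite /caret_at; case: (ltnP k m) => Hkm HkN.
  by rewrite -catA /= -nseqD; congr (_ ++ _ :: nseq _ _); lia.
rewrite -{1}(subnKC Hkm) nseqD -catA; congr (_ ++ _ ++ _ :: nseq _ _); lia.
Qed.

Lemma addc_graft k t : k < nleaves t -> addc d k t = graft t (caret_at k (nleaves t)).
Proof.
elim/tree_all_ind: t k => [|ts IH] k; first by case: k.
rewrite addcE graftE nleavesE => Hk; congr Node.
elim: ts IH k Hk => [_|t ts IHl [IHt IHts]] k //= Hk.
rewrite caret_at_split //; case: ltnP => Hkm.
  by rewrite take_size_cat ?drop_size_cat ?size_caret_at ?graftl_leaves -?IHt.
rewrite take_size_cat ?drop_size_cat ?size_nseq // graft_leaves IHl //; lia.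
Qed.

Section PositiveArity.
Hypothesis d_gt0 : 0 < d.

Lemma nleaves_addc k t : k < nleaves t -> nleaves (addc d k t) = nleaves t + d.-1.
Proof.
move=> Hk; rewrite addc_graft // nleaves_graft ?size_caret_at //.
rewrite /caret_at map_cat sumn_cat map_cons nleaves_caret /= !map_nseq !sumn_nseq /=; lia.
Qed.

Lemma nleaves_gt0 t : dary d t -> 0 < nleaves t.
Proof.
elim/tree_all_ind: t => // ts IH; rewrite daryE nleavesE => /andP[/eqP Hs Hall].
case: ts IH Hs Hall => [|t ts] /=; first by move=> _ Hs; lia.
by case=> IHt _ _ /andP[/IHt]; lia.
Qed.

End PositiveArity.

Lemma dary_addc k t : k < nleaves t -> dary d t -> dary d (addc d k t).
Proof.
move=> Hk Ht; rewrite addc_graft //.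
by apply: dary_graft; rewrite ?all_dary_caret_at ?size_caret_at.
Qed.

Lemma common_expansion t u : dary d t -> dary d u -> exists ss rr,
  [/\ all (dary d) ss, all (dary d) rr, size ss = nleaves t, size rr = nleaves u
    & graft t ss = graft u rr].
Proof.
elim/tree_all_ind: t u => [|ts IH] u Ht Hu.
  exists [:: u], (nseq (nleaves u) Leaf).
  by rewrite all_seq1 Hu all_dary_leaves size_nseq graft_leaves.
case: u Hu => [|us] Hu.
  exists (nseq (nleaves (Node ts)) Leaf), [:: Node ts].
  by rewrite all_seq1 Ht all_dary_leaves size_nseq graft_leaves.
move: Ht Hu; rewrite !daryE !nleavesE => /andP[/eqP Hs Hts] /andP[/eqP Hs' Hus].
have : size ts = size us by rewrite Hs Hs'.
elim: ts IH us Hts Hus {Hs Hs'} => [_|t ts IHl [IHt IHts]] [|u us] //= Hts Hus Hsz.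
  by exists [::], [::].
case/andP: Hts => Ht Hts; case/andP: Hus => Hu Hus.
have [ss1 [rr1 [A1 B1 C1 D1 E1]]] := IHt u Ht Hu.
have [ss2 [rr2 [A2 B2 C2 D2]]] := IHl IHts us Hts Hus (eq_add_S _ _ Hsz).
rewrite !graftE => -[E2].
exists (ss1 ++ ss2), (rr1 ++ rr2).
rewrite !all_cat A1 A2 B1 B2 !size_cat C1 C2 D1 D2; split=> //.
rewrite /= !take_size_cat ?drop_size_cat // E1.
by congr (Node (_ :: _)); exact: E2.
Qed.

Lemma common_expansion_seq ss rr : size ss = size rr ->
  all (dary d) ss -> all (dary d) rr -> exists a b : seq (seq tree),
  [/\ shape a = map nleaves ss, shape b = map nleaves rr,
      all (all (dary d)) a, all (all (dary d)) b & graft2 ss a = graft2 rr b].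
Proof.
elim: ss rr => [|s ss IH] [|r rr] //= Hsz.
  by move=> _ _; exists [::], [::].
case/andP=> Hs Hss /andP[Hr Hrr].
have [sa [rb [A B C D E]]] := common_expansion Hs Hr.
have [a [b [A' B' C' D' E']]] := IH rr (eq_add_S _ _ Hsz) Hss Hrr.
by exists (sa :: a), (rb :: b); rewrite /= A B C D E A' B' C' D' E'.
Qed.

Lemma common_regraft ss rr : size ss = size rr ->
  all (dary d) ss -> all (dary d) rr -> exists a b,
  [/\ all (dary d) a, all (dary d) b, size a = sumn (map nleaves ss),
      size b = sumn (map nleaves rr)
    & forall u, nleaves u = size ss -> graft (graft u ss) a = graft (graft u rr) b].
Proof.
move=> Hsz Hss Hrr.
have [a [b [Sa Sb Aa Ab E]]] := common_expansion_seq Hsz Hss Hrr.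
exists (flatten a), (flatten b).
rewrite !all_flatten !size_flatten Sa Sb Aa Ab; split=> // u Hu.
by rewrite graft_assoc ?Hu // E graft_assoc ?Hu -?Hsz.
Qed.

Lemma shape_seq1 (ss : seq tree) : shape [seq [:: s] | s <- ss] = nseq (size ss) 1.
Proof. by elim: ss => //= s ss ->. Qed.

Lemma graft_addc t ss i ts : size ss = nleaves t -> i < size ss ->
  nth Leaf ss i = Node ts -> size ts = d ->
  graft t ss = graft (addc d i t) (take i ss ++ ts ++ drop i.+1 ss).
Proof.
move=> Hs Hi Hn Hts.
have Hti : size (take i ss) = i by rewrite size_takel // ltnW.
have Hdi : size (drop i.+1 ss) = nleaves t - i.+1 by rewrite size_drop Hs.
set rrs := [seq [:: s] | s <- take i ss] ++ ts :: [seq [:: s] | s <- drop i.+1 ss].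
have flatten_rrs : flatten rrs = take i ss ++ ts ++ drop i.+1 ss.
  by rewrite flatten_cat /= !flatten_seq1.
have shape_rrs : shape rrs = map nleaves (caret_at i (nleaves t)).
  rewrite /shape map_cat map_cons -!/(shape _) !shape_seq1 /caret_at map_cat map_cons.
  by rewrite nleaves_caret !map_nseq Hti Hdi Hts.
have Hit : i < nleaves t by rewrite -Hs.
rewrite addc_graft // -flatten_rrs graft_assoc ?size_caret_at //.
rewrite /caret_at graft2_cat ?size_map ?size_nseq ?Hti //; cbn [graft2].
by rewrite graft_caret // !graft2_leaves // -Hn -drop_nth // cat_take_drop.
Qed.

Fixpoint ncarets (t : tree) : nat :=
  match t with
  | Leaf => 0
  | Node ts => ((fix f (ts : seq tree) : nat :=
                  if ts is t :: ts then ncarets t + f ts else 0) ts).+1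
  end.

Lemma ncaretsE ts : ncarets (Node ts) = (sumn (map ncarets ts)).+1.
Proof. by rewrite /=; congr S; elim: ts => //= t ts ->. Qed.

Lemma leaves_or_node ss : ss = nseq (size ss) Leaf \/
  exists i ts, i < size ss /\ nth Leaf ss i = Node ts.
Proof.
elim: ss => [|[|ts] ss IH]; [by left | | by right; exists 0, ts].
by case: IH => [E | [i [ts Hi]]]; [left; rewrite /= -E | right; exists i.+1, ts].
Qed.

Definition refining_forest (T U : tree) (ss : seq tree) :=
  [/\ all (dary d) ss, size ss = nleaves T & size ss = nleaves U].

Definition corefine (T U T' U' : tree) := exists ss ss',
  [/\ refining_forest T U ss, refining_forest T' U' ss',
      graft T ss = graft T' ss' & graft U ss = graft U' ss'].

Lemma refining_forest_regraft T U ss rr : refining_forest T U ss ->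
  all (dary d) rr -> size rr = sumn (map nleaves ss) ->
  refining_forest T U (regraft ss rr).
Proof.
by case=> Hss HT HU Hrr Hr; split; rewrite ?all_dary_regraft ?size_regraft.
Qed.

Lemma corefine_refl T U : nleaves U = nleaves T -> corefine T U T U.
Proof.
move=> HU; exists (nseq (nleaves T) Leaf), (nseq (nleaves T) Leaf).
by split=> //; split; rewrite ?all_dary_leaves ?size_nseq.
Qed.

Lemma corefine_sym T U T' U' : corefine T U T' U' -> corefine T' U' T U.
Proof. by case=> ss [ss' [H H' ET EU]]; exists ss', ss. Qed.

Lemma corefine_swap T U T' U' : corefine T U T' U' -> corefine U T U' T'.
Proof. by case=> ss [ss' [[? ? ?] [? ? ?] ET EU]]; exists ss, ss'. Qed.

Lemma corefine_trans T U T' U' T'' U'' :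
  corefine T U T' U' -> corefine T' U' T'' U'' -> corefine T U T'' U''.
Proof.
move=> [s1 [s2 [H1 H2 ET1 EU1]]] [s3 [s4 [H3 H4 ET2 EU2]]].
case: H1 H2 H3 H4 => [A1 T1 U1] [A2 T2 U2] [A3 T3 U3] [A4 T4 U4].
have [a [b [Aa Ab Sa Sb Eab]]] := common_regraft (etrans T2 (esym T3)) A2 A3.
have E12 : sumn (map nleaves s1) = sumn (map nleaves s2).
  by rewrite -(nleaves_graft T1) -(nleaves_graft T2) ET1.
have E34 : sumn (map nleaves s4) = sumn (map nleaves s3).
  by rewrite -(nleaves_graft T4) -(nleaves_graft T3) ET2.
exists (regraft s1 a), (regraft s4 b); split.
- by apply: refining_forest_regraft; rewrite ?E12.
- by apply: refining_forest_regraft; rewrite ?E34.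
- rewrite -(graft_graft T1) ?Sa // ET1 Eab -?T2 // ET2 graft_graft //.
  by rewrite Sb E34.
- rewrite -(graft_graft U1) ?Sa -?T1 // EU1 Eab -?U2 // EU2 graft_graft -?U4 //.
  by rewrite Sb E34.
Qed.

Lemma corefine_comp T U W T' U' W' :
  corefine T U T' U' -> corefine U W U' W' -> corefine T W T' W'.
Proof.
move=> [s1 [s1' [H1 H1' ET EU]]] [r [r' [Hr Hr' EU' EW]]].
case: H1 H1' Hr Hr' => [A1 T1 U1] [A1' T1' U1'] [Ar Ur Wr] [Ar' Ur' Wr'].
have [a [b [Aa Ab Sa Sb Eab]]] := common_regraft (etrans U1 (esym Ur)) A1 Ar.
have E1 : sumn (map nleaves s1') = sumn (map nleaves s1).
  by rewrite -(nleaves_graft T1') -(nleaves_graft T1) ET.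
have Er : sumn (map nleaves r') = sumn (map nleaves r).
  by rewrite -(nleaves_graft Ur') -(nleaves_graft Ur) EU'.
have Eforest : regraft s1' a = regraft r' b.
  apply: (graft_inj (t := U')); rewrite ?size_regraft //.
  by rewrite -!graft_graft ?E1 ?Er // -EU Eab -?EU' // U1.
exists (regraft s1 a), (regraft s1' a); split.
- have HTW : refining_forest T W s1 by split; rewrite // -Wr Ur.
  exact: refining_forest_regraft HTW Aa Sa.
- have HTW' : refining_forest T' W' s1' by split; rewrite // -Wr' Ur'.
  by apply: refining_forest_regraft HTW' Aa _; rewrite E1.
- by rewrite -!graft_graft ?E1 // ET.
- rewrite Eforest -(graft_graft Wr'); last by rewrite Sb Er.
  rewrite -EW -Eab; last by rewrite -Wr Ur U1.
  by rewrite graft_graft // -Wr Ur.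
Qed.

Definition dary_pair (T U : tree) := [/\ dary d T, dary d U & nleaves U = nleaves T].

Lemma dary_pair_sym T U : dary_pair T U -> dary_pair U T.
Proof. by case. Qed.

Lemma dary_pair_graft T U ss : dary_pair T U -> refining_forest T U ss ->
  dary_pair (graft T ss) (graft U ss).
Proof.
case=> HT HU _ [Hss ST SU].
by split; rewrite ?dary_graft ?nleaves_graft.
Qed.

Lemma dary_pair_trans T U W : dary_pair T U -> dary_pair U W -> dary_pair T W.
Proof. by case=> HT _ HnU [_ HW HnW]; split; rewrite // HnW. Qed.

Lemma pair_common_expansion T U A B : dary_pair T U -> dary_pair A B ->
  exists s t, [/\ refining_forest T U s, refining_forest A B t & graft U s = graft A t].
Proof.
case=> _ HU HnU [HA _ HnB].
have [s [t [As At Ss St E]]] := common_expansion HU HA.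
by exists s, t; split=> //; split; rewrite // -?HnU ?HnB.
Qed.

End DaryTrees.

(** * Expansions of triples *)

Lemma permn_lt n (s : 'S_n) k : k < n -> permn s k < n.
Proof. by move=> Hk; rewrite /permn; case: insubP => [o _ _ | ]; rewrite ?ltn_ord ?Hk. Qed.

Lemma tmul_mem d (c : cloning_system d) (X Y : triple c -> Prop)
    n T (g : G c n) U (h : G c n) W :
  X (Triple T g U) -> Y (Triple U h W) -> tmul X Y (Triple T (gmul c g h) W).
Proof. by move=> HX HY; exists n, T, g, U, h, W; split=> //; split=> //; exact: rst_refl. Qed.

Section CloningSystem.
Variables (d : nat) (c : cloning_system d).

Lemma gmulxV n (x : G c n) : gmul c x (ginv c x) = gone c n.
Proof.
set e := gmul c x (ginv c x).
have e_idem : gmul c e e = e by rewrite /e -gmulA (gmulA (ginv c x)) gmulV gmul1.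
transitivity (gmul c (gone c n) e); first by rewrite gmul1.
by rewrite -{1}(gmulV e) -gmulA e_idem gmulV.
Qed.

Lemma gmulx1 n (x : G c n) : gmul c x (gone c n) = x.
Proof. by rewrite -(gmulV x) gmulA gmulxV gmul1. Qed.

Lemma gmulI n (a x y : G c n) : gmul c a x = gmul c a y -> x = y.
Proof. by move=> E; rewrite -(gmul1 x) -(gmulV a) -gmulA E gmulA gmulV gmul1. Qed.

Lemma ginv_unique n (a b : G c n) : gmul c a b = gone c n -> a = ginv c b.
Proof. by move=> E; rewrite -(gmulx1 a) -(gmulxV b) gmulA E gmul1. Qed.

Lemma ginv1 n : ginv c (gone c n) = gone c n.
Proof. by rewrite -{2}(gmulV (gone c n)) gmulx1. Qed.

Lemma ginv_eq1 n (g : G c n) : ginv c g = gone c n -> g = gone c n.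
Proof. by move=> E; rewrite -(gmul1 g) -E gmulV. Qed.

Lemma rho1 n (i : 'I_n) : rho c (gone c n) i = i.
Proof. by apply: (@perm_inj _ (rho c (gone c n))); rewrite -rhoM gmul1. Qed.

Lemma permn_rho1 n k : permn (rho c (gone c n)) k = k.
Proof. by rewrite /permn; case: insubP => [o _ <-|]; rewrite ?rho1. Qed.

Lemma kappa1 n k : k < n -> kappa c k (gone c n) = gone c (n + d.-1).
Proof.
move=> Hk; have := cloneC1 (gone c n) (gone c n) Hk.
rewrite gmul1 permn_rho1 -{1}(gmulx1 (kappa c k (gone c n))).
by move/gmulI/esym.
Qed.

Lemma kappa_eq1 n k (g : G c n) : k < n -> kappa c k g = gone c (n + d.-1) -> g = gone c n.
Proof. by move=> Hk E; apply: (kappa_inj Hk); rewrite E kappa1. Qed.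

Definition ftriple n T U : triple c := Triple T (gone c n) U.

Definition is_ftriple (x : triple c) := wf_triple x /\ tg x = gone c (tn x).

Lemma tequiv_invariant (P : triple c -> Prop) :
  (forall x y, expand x y -> P x <-> P y) -> forall x y, tequiv x y -> P x <-> P y.
Proof.
move=> HP x y; elim=> {x y} [x y /HP|x|x y _ IH|x y z _ IH1 _ IH2] //; tauto.
Qed.

Lemma tequiv_tg1 (x y : triple c) :
  tequiv x y -> tg x = gone c (tn x) <-> tg y = gone c (tn y).
Proof.
apply: (tequiv_invariant (P := fun x => tg x = gone c (tn x))).
move=> _ _ [n T g U k _ Hk] /=.
by split=> [->|]; [exact: kappa1 | exact: kappa_eq1].
Qed.

Section PositiveArity.
Hypothesis d_gt0 : 0 < d.

Lemma expand_wf (x y : triple c) : expand x y -> wf_triple y.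
Proof.
case=> n T g U k [/= HT [HU [HnT HnU]]] Hk.
have Hp : permn (rho c g) k < n by exact: permn_lt.
by split; [|split; [|split]]; rewrite /= ?dary_addc ?nleaves_addc ?HnT ?HnU.
Qed.

Lemma tequiv_is_ftriple (x y : triple c) :
  tequiv x y -> is_ftriple x <-> is_ftriple y.
Proof.
move=> Hxy; rewrite /is_ftriple (tequiv_tg1 Hxy).
suff: wf_triple x <-> wf_triple y by tauto.
move: Hxy; apply: (tequiv_invariant (P := @wf_triple d c)) => x' y' E.
by split=> _; [exact: expand_wf E | case: E].
Qed.

Lemma expand_ftriple n T U k : wf_triple (ftriple n T U) -> k < n ->
  expand (ftriple n T U) (ftriple (n + d.-1) (addc d k T) (addc d k U)).
Proof. by move=> Hw Hk; have := expand_intro Hw Hk; rewrite /= permn_rho1 kappa1. Qed.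

Lemma tequiv_corefine (x y : triple c) : tequiv x y -> is_ftriple x ->
  corefine d (tT x) (tU x) (tT y) (tU y).
Proof.
elim=> {x y} [x y Hxy|x|x y Hxy IH|x y z Hxy IH1 _ IH2] Hx.
- case: Hxy Hx => n T g U k [/= HT [HU [HnT HnU]]] Hk [_ /= ->] /=.
  have SnT : nleaves (addc d k T) = n + d.-1 by rewrite nleaves_addc ?HnT.
  have SnU : nleaves (addc d k U) = n + d.-1 by rewrite nleaves_addc ?HnU.
  exists (caret_at d k n), (nseq (n + d.-1) Leaf); rewrite permn_rho1.
  split; first by split; rewrite ?all_dary_caret_at ?size_caret_at.
  + by split; rewrite ?all_dary_leaves ?size_nseq.
  + by rewrite -SnT graft_leaves -HnT -addc_graft // HnT.
  + by rewrite -SnU graft_leaves -HnU -addc_graft // HnU.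
- by case: Hx => [[_ [_ [HnT HnU]]] _]; apply: corefine_refl; rewrite HnT HnU.
- exact/corefine_sym/IH/(tequiv_is_ftriple Hxy).
- exact: corefine_trans (IH1 Hx) (IH2 ((tequiv_is_ftriple Hxy).1 Hx)).
Qed.

Lemma tequiv_graft ss n T U : is_ftriple (ftriple n T U) ->
  refining_forest d T U ss ->
  tequiv (ftriple n T U) (ftriple (nleaves (graft T ss)) (graft T ss) (graft U ss)).
Proof.
(* Each step turns one caret of [ss] into an expansion of the triple. *)
have [N] := ubnP (sumn (map ncarets ss)); elim: N ss n T U => // N IH ss n T U.
move=> /ltnSE HN HF [Hss SsT SsU]; have [[/= HT [HU [HnT HnU]]] _] := HF.
case: (leaves_or_node ss) => [Eleaves|[i [ts [Hi Hnode]]]].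
  have ET : graft T ss = T by rewrite Eleaves SsT graft_leaves.
  have EU : graft U ss = U by rewrite Eleaves SsU graft_leaves.
  by rewrite ET EU HnT; exact: rst_refl.
have : dary d (Node ts) by rewrite -Hnode; apply: (all_nthP Leaf Hss).
rewrite daryE => /andP[/eqP Hts Hallts].
have Hin : i < n by rewrite -HnT -SsT.
have Hss_split : ss = take i ss ++ Node ts :: drop i.+1 ss.
  by rewrite -Hnode -drop_nth // cat_take_drop.
have Hexp := expand_ftriple (proj1 HF) Hin.
rewrite (graft_addc SsT Hi Hnode Hts) (graft_addc SsU Hi Hnode Hts).
apply: rst_trans (rst_step _ _ _ _ Hexp) (IH _ _ _ _ _ _ _).
- move: HN; rewrite {1}Hss_split !map_cat !sumn_cat map_cons ncaretsE /=; lia.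
- by apply/(tequiv_is_ftriple (rst_step _ _ _ _ Hexp)).
- have Hsize : size (take i ss ++ ts ++ drop i.+1 ss) = n + d.-1.
    by rewrite !size_cat Hts size_takel ?size_drop; lia.
  split; rewrite ?nleaves_addc ?Hsize ?HnT ?HnU //; try lia.
  move: Hss; rewrite {1}Hss_split !all_cat /= => /and3P[-> _ ->].
  by rewrite Hallts.
Qed.

Lemma corefine_tequiv (x y : triple c) : is_ftriple x -> is_ftriple y ->
  corefine d (tT x) (tU x) (tT y) (tU y) -> tequiv x y.
Proof.
case: x => nx Tx gx Ux [Hwx /= ->]; case: y => ny Ty gy Uy [Hwy /= ->] /=.
case=> ss [ss' [Hss Hss' ET EU]].
have := tequiv_graft (conj Hwx erefl : is_ftriple (ftriple nx Tx Ux)) Hss.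
have := tequiv_graft (conj Hwy erefl : is_ftriple (ftriple ny Ty Uy)) Hss'.
rewrite -ET -EU => Hy Hx; exact: rst_trans Hx (rst_sym _ _ _ _ Hy).
Qed.

(** * The subgroup F_d *)

Definition fclass T U : triple c -> Prop := cls (ftriple (nleaves T) T U).

Lemma cls_tequiv (x y : triple c) : tequiv x y -> cls x = cls y.
Proof.
move=> Hxy; apply: functional_extensionality => z; apply: propositional_extensionality.
by split=> Hz; [exact: rst_trans Hz Hxy | exact: rst_trans Hz (rst_sym _ _ _ _ Hxy)].
Qed.

Lemma is_ftriple_pair T U : dary_pair d T U -> is_ftriple (ftriple (nleaves T) T U).
Proof. by case=> HT HU HnU; split=> //; rewrite /wf_triple /=; tauto. Qed.

Lemma fclassP T U n T' (g : G c n) U' : dary_pair d T U ->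
  fclass T U (Triple T' g U') <->
  [/\ g = gone c n, nleaves T' = n, dary_pair d T' U' & corefine d T' U' T U].
Proof.
move=> HTU; have HF := is_ftriple_pair HTU; split=> [H|].
  have HF' : is_ftriple (Triple T' g U') by apply/(tequiv_is_ftriple H).
  have [[/= HT' [HU' [HnT' HnU']]] /= Hg] := HF'.
  split=> //; first by split; rewrite ?HnT' ?HnU'.
  exact: tequiv_corefine H HF'.
case=> -> En HTU' Hco; subst n.
exact: corefine_tequiv (is_ftriple_pair HTU') HF Hco.
Qed.

Lemma fclass_graft T U ss : dary_pair d T U -> refining_forest d T U ss ->
  fclass T U = fclass (graft T ss) (graft U ss).
Proof. by move=> HTU Hss; apply: cls_tequiv; exact: tequiv_graft (is_ftriple_pair HTU) Hss. Qed.

Lemma fclass_mul T U W : dary_pair d T U -> dary_pair d U W ->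
  tmul (fclass T U) (fclass U W) = fclass T W.
Proof.
move=> HTU HUW; have HTW := dary_pair_trans HTU HUW.
apply: functional_extensionality => z; apply: propositional_extensionality; split.
  case=> n [T' [g [U' [h [W' [/(fclassP _ _ _ HTU) [-> HnT' HTU' Hco1]]]]]]].
  case=> /(fclassP _ _ _ HUW) [-> HnU' HUW' Hco2]; rewrite gmul1 => Hz.
  apply: rst_trans Hz _; apply/(fclassP _ _ _ HTW).
  by split=> //; [exact: dary_pair_trans HTU' HUW' | exact: corefine_comp Hco1 Hco2].
move=> Hz; exists (nleaves T), T, (gone c _), U, (gone c _), W.
split; first exact: rst_refl.
have [_ _ HnU] := HTU; split; last by rewrite gmul1.
by apply/(fclassP _ _ _ HUW); split=> //; case: HUW => _ _ /corefine_refl.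
Qed.

Lemma fclass_inv T U : dary_pair d T U -> tinv (fclass T U) = fclass U T.
Proof.
move=> HTU; have HUT := dary_pair_sym HTU; have [_ _ HnU] := HTU.
apply: functional_extensionality => z; apply: propositional_extensionality; split.
  case=> n [T' [g [U' [/(fclassP _ _ _ HTU) [-> HnT' HTU' Hco]]]]].
  rewrite ginv1 => Hz; apply: rst_trans Hz _; apply/(fclassP _ _ _ HUT).
  have [_ _ HnU'] := HTU'.
  by split=> //; [rewrite HnU' | exact: dary_pair_sym | exact: corefine_swap].
move=> Hz; exists (nleaves T), T, (gone c _), U; split; first exact: rst_refl.
by rewrite ginv1 -HnU.
Qed.

Lemma FdP X : Fd X <-> exists T U, dary_pair d T U /\ X = fclass T U.
Proof.
split=> [[n [T [U [[/= HT [HU [HnT HnU]]] ->]]]]|[T [U [[HT HU HnU] ->]]]].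
  by subst n; exists T, U; split; first by split.
by exists (nleaves T), T, U; split=> //; rewrite /wf_triple /=; tauto.
Qed.

Lemma Fd_mul T1 U1 T2 U2 : dary_pair d T1 U1 -> dary_pair d T2 U2 ->
  Fd (tmul (fclass T1 U1) (fclass T2 U2)).
Proof.
move=> H1 H2; have [s [t [Hs Ht E]]] := pair_common_expansion H1 H2.
have H1' := dary_pair_graft H1 Hs; have H2' := dary_pair_graft H2 Ht.
rewrite (fclass_graft H1 Hs) (fclass_graft H2 Ht) -E in H2' *.
apply/FdP; exists (graft T1 s), (graft U2 t).
by rewrite fclass_mul //; split=> //; exact: dary_pair_trans H1' H2'.
Qed.

Lemma conjFd_sub_Fd T U Y : dary_pair d T U -> conjFd (fclass T U) Y -> Fd Y.
Proof.
move=> HTU [Z [/FdP [A [B [HAB ->]]] ->]].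
rewrite fclass_inv //; have /FdP [T1 [U1 [H1 ->]]] := Fd_mul (dary_pair_sym HTU) HAB.
exact: Fd_mul.
Qed.

Lemma conjFd_fclass_matched T J B : dary_pair d T J -> dary_pair d J B ->
  conjFd (fclass T J) (fclass J B).
Proof.
(* After refining, [J,1,B] = [J3,1,K] while [T,1,J] is both [T2,1,J3] and
   [T4,1,K]; so the element to conjugate is [T2,1,T4]. *)
move=> HTJ HJB; have HJT := dary_pair_sym HTJ.
have [s3 [s4 [H3 H4 E]]] := pair_common_expansion HJB HJT.
have H3' : refining_forest d J T s3 by case: H3 HJT => ? ? _ [_ _ HnT]; split; rewrite // HnT.
have H4' : refining_forest d T J s4 by case: H4.
set K := graft B s3; set J3 := graft J s3; set T2 := graft T s3; set T4 := graft T s4.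
have HJ3K : dary_pair d J3 K := dary_pair_graft HJB H3.
have HJ3T2 : dary_pair d J3 T2 := dary_pair_graft HJT H3'.
have HT4K : dary_pair d T4 K by rewrite /K E; exact: dary_pair_graft HTJ H4'.
have HT2T4 : dary_pair d T2 T4.
  exact: dary_pair_trans (dary_pair_sym HJ3T2) (dary_pair_trans HJ3K (dary_pair_sym HT4K)).
exists (fclass T2 T4); split; first by apply/FdP; exists T2, T4.
rewrite fclass_inv // (fclass_graft HJT H3') (fclass_graft HJB H3) -/J3 -/T2 -/K.
rewrite (fclass_graft HTJ H4') -/T4 -E -/K !fclass_mul //.
exact: dary_pair_trans HJ3T2 HT2T4.
Qed.

Lemma Fd_sub_conjFd T U Y : dary_pair d T U -> Fd Y -> conjFd (fclass T U) Y.
Proof.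
move=> HTU /FdP [A [B [HAB ->]]].
have [s1 [s2 [H1 H2 E]]] := pair_common_expansion HTU HAB.
have HTJ := dary_pair_graft HTU H1; have HJB := dary_pair_graft HAB H2.
rewrite (fclass_graft HTU H1) (fclass_graft HAB H2) -E in HJB *.
exact: conjFd_fclass_matched.
Qed.

Lemma conjFd_fclass T U : dary_pair d T U -> conjFd (fclass T U) = Fd (c := c).
Proof.
move=> HTU; apply: functional_extensionality => Y; apply: propositional_extensionality.
by split; [exact: conjFd_sub_Fd | exact: Fd_sub_conjFd].
Qed.

(** * Elements normalising F_d *)

Lemma kappa_conj_cancel n T (g : G c n) U a m :
  let X := cls (Triple T g U) in
  wf_triple (Triple T g U) -> (forall Y, conjFd X Y -> Fd Y) -> a < n -> m < n ->
  gmul c (kappa c a (ginv c g)) (kappa c m g) = gone c (n + d.-1).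
Proof.
move=> X Hw Hnorm Ha Hm; have [/= HT [HU [HnT HnU]]] := Hw.
set b := permn (rho c g) m; have Hb : b < n by exact: permn_lt.
set Z := cls (ftriple (n + d.-1) (addc d a T) (addc d b T)).
have FZ : Fd Z.
  exists (n + d.-1), (addc d a T), (addc d b T); split=> //.
  by split; [|split; [|split]]; rewrite /= ?dary_addc ?nleaves_addc ?HnT.
have Hwinv : wf_triple (Triple U (ginv c g) T) by rewrite /wf_triple /=.
set T' := addc d (permn (rho c (ginv c g)) a) U.
have Hinv : tinv X (Triple T' (kappa c a (ginv c g)) (addc d a T)).
  exists n, T, g, U; split; first exact: rst_refl.
  exact/rst_sym/rst_step/expand_intro.
have HX : X (Triple (addc d b T) (kappa c m g) (addc d m U)).
  exact/rst_sym/rst_step/expand_intro.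
have HZ : Z (ftriple (n + d.-1) (addc d a T) (addc d b T)) by exact: rst_refl.
have [n' [A [B [_ EY]]]] := Hnorm _ (ex_intro _ Z (conj FZ erefl)).
have := tmul_mem (tmul_mem Hinv HZ) HX; rewrite EY => /tequiv_tg1 Hlabel.
by have := Hlabel.2 erefl; rewrite /= gmulx1.
Qed.

End PositiveArity.

Section ArityAtLeastTwo.
Hypothesis d_gt1 : 1 < d.

Lemma tequiv_large (x : triple c) : wf_triple x ->
  forall N, exists y, [/\ tequiv x y, wf_triple y & N <= tn y].
Proof.
move=> Hx; elim=> [|N [[n T g U] [Hxy Hw /= HN]]].
  by exists x; split=> //; exact: rst_refl.
have Hn : 0 < n.
  by case: (Hw) => /= HT [_ [<- _]]; exact: nleaves_gt0 _ (ltnW d_gt1) _ HT.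
have Hexp := expand_intro Hw Hn.
exists (Triple (addc d (permn (rho c g) 0) T) (kappa c 0 g) (addc d 0 U)); split=> /=.
- exact: rst_trans Hxy (rst_step _ _ _ _ Hexp).
- exact: (expand_wf (ltnW d_gt1) Hexp).
- lia.
Qed.

Lemma Fd_of_normalizer (x : triple c) : diverse c -> wf_triple x ->
  (forall Y, conjFd (cls x) Y -> Fd Y) -> Fd (cls x).
Proof.
move=> [n0 Hdiv] Hx Hnorm.
have [[n T g U] [Hxy Hw /= Hn]] := tequiv_large Hx (maxn n0 1).
rewrite (cls_tequiv Hxy) in Hnorm *.
have Hn0 : n0 <= n by apply: leq_trans Hn; exact: leq_maxl.
have Hn1 : 0 < n by apply: leq_trans Hn; exact: leq_maxr.
have Hcancel := kappa_conj_cancel (ltnW d_gt1) Hw Hnorm.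
have Ek k : k < n -> kappa c k (ginv c g) = ginv c (kappa c 0 g).
  by move=> Hk; apply: ginv_unique; exact: Hcancel.
have : kappa c 0 (ginv c g) = gone c (n + d.-1).
  by apply: Hdiv Hn0 _ _ => k Hk; exists (ginv c g); rewrite !Ek.
move/(kappa_eq1 Hn1)/ginv_eq1 => Hg; subst g.
by exists n, T, U.
Qed.

End ArityAtLeastTwo.
End CloningSystem.

Theorem mainTheorem3 (d : nat) (hd : 2 <= d) (c : cloning_system d)
  (hdiv : diverse c) (x : triple c) (hx : wf_triple x) :
  conjFd (cls x) = Fd (c:=c) <-> Fd (cls x).
Proof.
split=> [Hconj | ].
  by apply: Fd_of_normalizer => // Y; rewrite Hconj.
case/FdP => T [U [HTU ->]].
exact: (conjFd_fclass c (ltnW hd) HTU).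
Qed.
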